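(* Let $M\colon[0,\infty)\times[0,\infty)\to[0,\infty)$ be symmetric and moderately increasing, suppose $\rho_M(x,y)=\dfrac{|x-y|}{M(|x|,|y|)}$ is a metric on $\mathbb{R}^n$, and suppose that for each $x$ the function $M(x,\cdot)$ is of class $C^2$ on $(0,\infty)$. Then $\rho_M$ is locally convex.
   Context: Convention $0/0=0$. A function $f\colon[0,\infty)\to[0,\infty)$ is moderately increasing if it is increasing and $f(t)/t$ is decreasing; $M$ is moderately increasing if $M(x,\cdot)$ and $M(\cdot,x)$ are moderately increasing for each fixed $x$. A metric $d$ is locally convex if for every $x$ there is $r_0>0$ such that the ball $\{y: d(x,y)<r\}$ is (Euclidean) convex for every $0<r<r_0$. *)

From HB Require Import structures.
From mathcomp Require Import all_boot all_order all_algebra.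
From mathcomp Require Import all_classical all_reals all_analysis.
Set Implicit Arguments. Unset Strict Implicit. Unset Printing Implicit Defensive.
Import Order.TTheory GRing.Theory Num.Theory.
Import numFieldNormedType.Exports.
Local Open Scope ring_scope.
Local Open Scope classical_set_scope.

Section Defs.
Variable R : realType.

Definition enorm (n : nat) (v : 'rV[R]_n) : R :=
  Num.sqrt (\sum_(i < n) (v ord0 i) ^+ 2).

Definition moderately_increasing (f : R -> R) : Prop :=
  (forall s t, 0 <= s -> s <= t -> f s <= f t) /\
  (forall s t, 0 < s -> s <= t -> f t / t <= f s / s).

Definition moderately_increasing2 (M : R -> R -> R) : Prop :=
  forall x, 0 <= x -> moderately_increasing (M x) /\
                      moderately_increasing (fun y => M y x).

(* rho_M(x,y) = |x-y| / M(|x|,|y|), with mathcomp's convention a/0 = 0. *)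
Definition rhoM (M : R -> R -> R) (n : nat) (x y : 'rV[R]_n) : R :=
  enorm (x - y) / M (enorm x) (enorm y).

Definition is_metric (T : Type) (d : T -> T -> R) : Prop :=
  (forall x y, 0 <= d x y) /\
  (forall x y, d x y = 0 <-> x = y) /\
  (forall x y, d x y = d y x) /\
  (forall x y z, d x z <= d x y + d y z).

Definition convex_set (n : nat) (S : set 'rV[R]_n) : Prop :=
  forall a b, S a -> S b -> forall t : R, 0 <= t -> t <= 1 ->
    S ((1 - t) *: a + t *: b).

Definition locally_convex_metric (n : nat) (d : 'rV[R]_n -> 'rV[R]_n -> R) : Prop :=
  forall x, exists2 r0 : R, 0 < r0 &
    forall r, 0 < r -> r < r0 -> convex_set [set y | d x y < r].

Definition C2_on_pos (f : R -> R) : Prop :=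
  (forall t, 0 < t -> derivable f t 1) /\
  (forall t, 0 < t -> derivable f^`() t 1) /\
  (forall t, 0 < t -> {for t, continuous f^`()^`()}).

End Defs.

From Pilot Require Import Defs.
From HB Require Import structures.
From mathcomp Require Import all_boot all_order all_algebra.
From mathcomp Require Import all_classical all_reals all_analysis.
From mathcomp Require Import ring lra.
Set Implicit Arguments. Unset Strict Implicit. Unset Printing Implicit Defensive.
Import Order.TTheory GRing.Theory Num.Theory.
Import numFieldNormedType.Exports.
Local Open Scope ring_scope.
Local Open Scope classical_set_scope.

(* Fix x, put a = |x| and m = M(a, .); the r-ball of rho_M around x is
   {y : |x - y| < r m(|y|)}.  For x = 0 it is a Euclidean ball, since
   t / M(0, t) is nondecreasing.  For x <> 0, bounds on m' and m'' near a make
   m Lipschitz and semiconcave there.  Feeding the identity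
   |(1-t)p + tq|^2 = (1-t)|p|^2 + t|q|^2 - t(1-t)|p - q|^2 into this gives
   m(|v|)^2 >= (1-t) m(|p|)^2 + t m(|q|)^2 - C t(1-t) |p - q|^2 for a
   constant C and v = (1-t)p + tq, while the same identity describes
   |x - v|^2 exactly.  So once r^2 C <= 1, the function
   y |-> r^2 m(|y|)^2 - |x - y|^2 is concave along segments, and its
   positivity set, the ball, is convex; for small r the ball stays in the
   region where the bounds on m hold. *)

Section EuclideanNorm.
Variables (R : realType) (n : nat).
Implicit Types u w : 'rV[R]_n.

Definition dotr u w : R := \sum_(i < n) u ord0 i * w ord0 i.

Lemma enorm_ge0 u : 0 <= enorm u.
Proof. exact: sqrtr_ge0. Qed.

Lemma sqr_enorm u : enorm u ^+ 2 = dotr u u.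
Proof.
rewrite sqr_sqrtr; last by apply: sumr_ge0 => i _; apply: sqr_ge0.
by apply: eq_bigr => i _; rewrite expr2.
Qed.

Lemma sqr_enorm_scaleD (k l : R) u w : enorm (k *: u + l *: w) ^+ 2 =
  k ^+ 2 * enorm u ^+ 2 + 2 * k * l * dotr u w + l ^+ 2 * enorm w ^+ 2.
Proof.
rewrite !sqr_enorm /dotr !mulr_sumr -!big_split /=.
by apply: eq_bigr => i _; rewrite !mxE; ring.
Qed.

Lemma enorm_eq0 u : (enorm u == 0) = (u == 0).
Proof.
apply/idP/eqP => [|->]; last first.
  by rewrite /enorm big1 ?sqrtr0// => i _; rewrite mxE expr0n.
rewrite sqrtr_eq0 le_eqVlt ltNge sumr_ge0 ?orbF => [|i _]; last exact: sqr_ge0.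
rewrite psumr_eq0 => [/allP u0|i _]; last exact: sqr_ge0.
apply/matrixP => i j; rewrite ord1 mxE.
by have /= := u0 j (mem_index_enum _); rewrite sqrf_eq0 => /eqP.
Qed.

Lemma enorm0 : enorm (0 : 'rV[R]_n) = 0.
Proof. by apply/eqP; rewrite enorm_eq0. Qed.

Lemma enorm_gt0 u : (0 < enorm u) = (u != 0).
Proof. by rewrite lt_def enorm_eq0 enorm_ge0 andbT. Qed.

Lemma enormN u : enorm (- u) = enorm u.
Proof. by congr Num.sqrt; apply: eq_bigr => i _; rewrite mxE sqrrN. Qed.

Lemma CauchySchwarz_enorm u w : dotr u w <= enorm u * enorm w.
Proof.
have [/eqP|uw0] := eqVneq (enorm u * enorm w) 0.
  rewrite mulf_eq0 !enorm_eq0 => /orP[]/eqP->;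
    by rewrite /dotr big1 ?mulr_ge0 ?enorm_ge0// => i _; rewrite mxE ?mul0r ?mulr0.
have uw_gt0 : 0 < enorm u * enorm w by rewrite lt_def uw0 mulr_ge0 ?enorm_ge0.
have := sqr_ge0 (enorm (enorm w *: u + (- enorm u) *: w)).
rewrite sqr_enorm_scaleD.
have -> : enorm w ^+ 2 * enorm u ^+ 2 + 2 * enorm w * - enorm u * dotr u w
    + (- enorm u) ^+ 2 * enorm w ^+ 2
    = 2 * (enorm u * enorm w) * (enorm u * enorm w - dotr u w) by ring.
by rewrite pmulr_rge0 ?subr_ge0// mulr_gt0.
Qed.

Lemma ler_enormD u w : enorm (u + w) <= enorm u + enorm w.
Proof.
rewrite -ler_sqr ?nnegrE ?addr_ge0 ?enorm_ge0//.
have := sqr_enorm_scaleD 1 1 u w; rewrite !scale1r => ->.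
have := CauchySchwarz_enorm u w; lra.
Qed.

Lemma ler_enorm_dist u w : `|enorm u - enorm w| <= enorm (u - w).
Proof.
have := ler_enormD (u - w) w; have := ler_enormD (w - u) u.
rewrite !subrK -opprB enormN ler_norml; lra.
Qed.

Lemma sqr_enorm_conv (t : R) u w : enorm ((1 - t) *: u + t *: w) ^+ 2 =
  (1 - t) * enorm u ^+ 2 + t * enorm w ^+ 2 - t * (1 - t) * enorm (u - w) ^+ 2.
Proof.
have := sqr_enorm_scaleD 1 (-1) u w; rewrite scale1r scaleN1r => ->.
rewrite sqr_enorm_scaleD; ring.
Qed.

Lemma enorm_conv_le_max (t : R) u w : 0 <= t <= 1 ->
  enorm ((1 - t) *: u + t *: w) <= Num.max (enorm u) (enorm w).
Proof.
move=> /andP[t0 t1].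
have sD_ge0 : 0 <= t * (1 - t) * enorm (u - w) ^+ 2.
  by rewrite mulr_ge0 ?sqr_ge0 // mulr_ge0 // subr_ge0.
rewrite -ler_sqr ?nnegrE ?enorm_ge0 ?le_max ?enorm_ge0 // sqr_enorm_conv.
have [uw|/ltW wu] := leP (enorm u) (enorm w).
  by rewrite -ler_sqr ?nnegrE ?enorm_ge0 // in uw; nra.
by rewrite -ler_sqr ?nnegrE ?enorm_ge0 // in wu; nra.
Qed.

End EuclideanNorm.

Lemma ltr_conv (R : realDomainType) (x y x' y' t : R) :
  x < x' -> y < y' -> 0 <= t <= 1 -> (1 - t) * x + t * y < (1 - t) * x' + t * y'.
Proof.
move=> xx' yy' /andP[t0]; rewrite le_eqVlt => /predU1P[->|t1].
  by rewrite subrr !mul0r !mul1r !add0r.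
by apply: ltr_leD; [rewrite ltr_pM2l ?subr_gt0 | rewrite ler_wpM2l // ltW].
Qed.

Lemma conv_itv_oo (R : realDomainType) (lo hi A B t : R) :
  A \in `]lo, hi[%R -> B \in `]lo, hi[%R -> 0 <= t <= 1 ->
  (1 - t) * A + t * B \in `]lo, hi[%R.
Proof.
rewrite !in_itv /= => /andP[loA Ahi] /andP[loB Bhi] t01.
have := ltr_conv loA loB t01; have := ltr_conv Ahi Bhi t01.
by rewrite -!mulrDl subrK !mul1r => -> ->.
Qed.

Lemma sqr_ge_of_subr_le (R : realDomainType) (w e g K : R) :
  0 <= w <= K -> 0 <= e -> w - e <= g -> 0 <= g -> w ^+ 2 - 2 * K * e <= g ^+ 2.
Proof. move=> /andP[w_ge0 w_le] e_ge0 weg g_ge0; have [we|ew] := leP w e; nra. Qed.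

Definition semiconcave_on (R : realType) (A : set R) (K : R) (f : R -> R) :=
  forall a b t, A a -> A b -> 0 <= t <= 1 ->
    (1 - t) * f a + t * f b - K * (t * (1 - t)) * (b - a) ^+ 2
      <= f ((1 - t) * a + t * b).

Section DerivableOnInterval.
Variables (R : realType) (lo hi : R) (f : R -> R).
Hypothesis f_derivable : {in `]lo, hi[%R, forall s, derivable f s 1}.

Lemma MVT_in x y : x \in `]lo, hi[%R -> y \in `]lo, hi[%R -> x <= y ->
  exists2 c, c \in `]lo, hi[%R &
    x <= c <= y /\ f y - f x = (f^`()%classic) c * (y - x).
Proof.
rewrite !in_itv /= => /andP[lox xhi] /andP[loy yhi] xy.
have f_derivable_xy s : x <= s <= y -> derivable f s 1.
  by case/andP=> xs sy; apply: f_derivable; rewrite in_itv /=; apply/andP; lra.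
have [c||c cxy ->] := @MVT_segment R f (f^`()%classic) x y xy.
- rewrite in_itv /= => /andP[xc cy]; rewrite derive1E.
  by apply/derivableP/f_derivable_xy; rewrite !ltW.
- apply: derivable_within_continuous => s.
  by rewrite in_itv; apply: f_derivable_xy.
move: cxy; rewrite in_itv /= => /andP[xc cy].
by exists c; rewrite ?in_itv /= ?xc ?cy //; apply/andP; lra.
Qed.

Lemma derive1_bounded_lipschitz K :
  {in `]lo, hi[%R, forall s, `|f^`() s| <= K} -> K.-lipschitz_(`]lo, hi[) f.
Proof.
move=> f'K [x y] /= [xI yI].
wlog yx : x y xI yI / y <= x.
  move=> wlog_yx; have [/wlog_yx|/ltW xy] := leP y x; first exact.
  by rewrite distrC [`|x - y|]distrC; apply: wlog_yx.
have [c cI [_ ->]] := MVT_in yI xI yx.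
by rewrite normrM ler_wpM2r ?f'K.
Qed.

Lemma derive1_lipschitz_semiconcave K : 0 <= K ->
  K.-lipschitz_(`]lo, hi[) f^`() -> semiconcave_on `]lo, hi[ K f.
Proof.
move=> K_ge0 f'K a b t aI bI t01.
wlog ab : a b t aI bI t01 / a <= b.
  move=> wlog_ab; have [/wlog_ab|/ltW ba] := leP a b; first exact.
  have t01' : 0 <= 1 - t <= 1 by case/andP: t01 => t0 t1; apply/andP; lra.
  have := wlog_ab b a (1 - t) bI aI t01' ba.
  have -> : 1 - (1 - t) = t by ring.
  rewrite (mulrC (1 - t) t) -[(a - b) ^+ 2]sqrrN opprB.
  by rewrite [t * f b + _]addrC [t * b + _]addrC.
have /andP[t0 t1] := t01; set u := (1 - t) * a + t * b.
have uI : u \in `]lo, hi[%R by apply: conv_itv_oo.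
have [au ub] : a <= u /\ u <= b by split; rewrite /u; nra.
have [c1 c1I [/andP[ac1 c1u] fua]] := MVT_in aI uI au.
have [c2 c2I [/andP[uc2 c2b] fbu]] := MVT_in uI bI ub.
have f'c21 : (f^`()%classic) c2 - (f^`()%classic) c1 <= K * (b - a).
  have := f'K (c2, c1) (conj c2I c1I).
  rewrite /= [`|c2 - c1|]ger0_norm ?subr_ge0; last lra.
  move=> /(le_trans (ler_norm _))/le_trans; apply; apply: ler_wpM2l => //; lra.
have fu : f u - ((1 - t) * f a + t * f b)
    = t * (1 - t) * (b - a) * ((f^`()%classic) c1 - (f^`()%classic) c2).
  have -> : f u - ((1 - t) * f a + t * f b)
      = (1 - t) * (f u - f a) - t * (f b - f u) by ring.
  by rewrite fua fbu /u; ring.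
have := ler_wpM2l (_ : 0 <= t * (1 - t) * (b - a)) f'c21.
by rewrite !mulr_ge0 ?subr_ge0//; lra.
Qed.

End DerivableOnInterval.

Lemma continuous_bounded_near (R : realType) (g : R -> R) (a : R) :
  {for a, continuous g} ->
  exists2 e : R, 0 < e & forall s, `|s - a| < e -> `|g s| <= `|g a| + 1.
Proof.
move=> ga; have [e e_gt0 ball_e] := (nbhs_ballP _ _).1 (cvgr_dist_lt _ _ ga _ ltr01).
exists e => // s sa; have := ball_e s; rewrite -ball_normE /= distrC => /(_ sa).
have := ler_normB (g a) (g a - g s); rewrite opprB addrC subrK; lra.
Qed.

Lemma C2_on_pos_locally_semiconcave (R : realType) (m : R -> R) (a : R) :
  0 < a -> C2_on_pos m ->
  exists d K1 K2 : R, [/\ 0 < d <= a / 2, 0 <= K1, 0 <= K2,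
    K1.-lipschitz_(`]a - d, a + d[) m & semiconcave_on `]a - d, a + d[ K2 m].
Proof.
move=> a_gt0 [m_der [m'_der m''_cont]].
have m'_cont : {for a, continuous m^`()}.
  exact/differentiable_continuous/derivable1_diffP/m'_der.
have [e1 e1_gt0 m''_bd] := continuous_bounded_near (m''_cont a a_gt0).
have [e2 e2_gt0 m'_bd] := continuous_bounded_near m'_cont.
set d := Num.min (Num.min e1 e2) (a / 2).
have d_gt0 : 0 < d by rewrite !lt_min e1_gt0 e2_gt0 divr_gt0.
have d_le : d <= a / 2 by rewrite ge_min lexx orbT.
have near_a s : s \in `]a - d, a + d[%R ->
    [/\ 0 < s, `|s - a| < e1 & `|s - a| < e2].
  rewrite in_itv /= => /andP[lo_s s_hi].
  have : `|s - a| < d by rewrite ltr_norml; apply/andP; lra.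
  by rewrite !lt_min => /andP[/andP[-> ->] _]; split => //; lra.
have m_derI : {in `]a - d, a + d[%R, forall s, derivable m s 1}.
  by move=> s /near_a[s_gt0 _ _]; apply: m_der.
have m'_derI : {in `]a - d, a + d[%R, forall s, derivable m^`() s 1}.
  by move=> s /near_a[s_gt0 _ _]; apply: m'_der.
exists d, (`|(m^`()%classic) a| + 1), (`|(m^`()^`()%classic) a| + 1).
split; rewrite ?d_gt0 ?d_le ?addr_ge0 //.
- by apply: derive1_bounded_lipschitz => // s /near_a[_ _ /m'_bd].
- apply: derive1_lipschitz_semiconcave; rewrite ?addr_ge0 //.
  by apply: derive1_bounded_lipschitz => // s /near_a[_ /m''_bd].
Qed.

Lemma moderately_increasing_growth (R : realType) (f : R -> R) (c s : R) :
  moderately_increasing f -> 0 < c -> 0 <= f c -> 0 <= s ->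
  c * f s <= f c * (c + s).
Proof.
move=> [f_incr f_ratio] c_gt0 fc_ge0 s_ge0.
have [sc|cs] := leP s c.
  by have := ler_wpM2l (ltW c_gt0) (f_incr _ _ s_ge0 sc); nra.
have := f_ratio _ _ c_gt0 (ltW cs).
rewrite ler_pdivrMr ?(lt_trans c_gt0) // mulrAC ler_pdivlMr // => cfs.
by apply: le_trans (_ : f c * s <= _); [rewrite mulrC | rewrite ler_wpM2l // lerDr ltW].
Qed.

Lemma profile_ball_sub_ball (R : realType) n (m : R -> R) (K r : R) (x y : 'rV[R]_n) :
  0 <= r -> 0 <= K -> r * K < enorm x ->
  (forall s, 0 <= s -> 2 * enorm x * m s <= K * (2 * enorm x + s)) ->
  enorm (x - y) < r * m (enorm y) -> enorm (x - y) < 3 * (r * K).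
Proof.
move=> r_ge0 K_ge0 rK m_growth xy.
have rK_ge0 : 0 <= r * K by rewrite mulr_ge0.
have x_gt0 : 0 < enorm x by apply: le_lt_trans rK.
have y_le : enorm y <= enorm x + enorm (x - y).
  by have := ler_enormD x (y - x); rewrite addrC subrK -opprB enormN.
have h1 : 2 * enorm x * enorm (x - y) < 2 * enorm x * (r * m (enorm y)).
  by rewrite ltr_pM2l ?mulr_gt0.
have h2 := ler_wpM2l r_ge0 (m_growth _ (enorm_ge0 y)).
have h3 := ler_wpM2l rK_ge0 y_le.
have h4 := ler_wpM2r (enorm_ge0 (x - y)) (ltW rK).
have : enorm x * enorm (x - y) < enorm x * (3 * (r * K)) by lra.
by rewrite ltr_pM2l.
Qed.

Section RadialProfile.
Variables (R : realType) (m : R -> R) (a d K1 K2 K3 : R).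
Hypotheses (a_gt0 : 0 < a) (d_le : d <= a / 2).
Hypotheses (K1_ge0 : 0 <= K1) (K2_ge0 : 0 <= K2).
Hypothesis m_bounded : {in `]a - d, a + d[%R, forall s, 0 <= m s <= K3}.
Hypothesis m_lipschitz : K1.-lipschitz_(`]a - d, a + d[) m.
Hypothesis m_semiconcave : semiconcave_on `]a - d, a + d[ K2 m.

Lemma profile_lower_bound A B V t D2 :
  A \in `]a - d, a + d[%R -> B \in `]a - d, a + d[%R -> V \in `]a - d, a + d[%R ->
  0 <= t <= 1 -> (A - B) ^+ 2 <= D2 ->
  V ^+ 2 = (1 - t) * A ^+ 2 + t * B ^+ 2 - t * (1 - t) * D2 ->
  (1 - t) * m A + t * m B - (K1 / a + K2) * (t * (1 - t)) * D2 <= m V.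
Proof.
move=> AI BI VI t01 ABD2 V2; have /andP[t0 t1] := t01.
set s := t * (1 - t); set U := (1 - t) * A + t * B.
have s_ge0 : 0 <= s by rewrite mulr_ge0 ?subr_ge0.
have UI : U \in `]a - d, a + d[%R by apply: conv_itv_oo.
have U2 : U ^+ 2 = (1 - t) * A ^+ 2 + t * B ^+ 2 - s * (A - B) ^+ 2.
  by rewrite /U /s; ring.
have mU : (1 - t) * m A + t * m B - K2 * s * D2 <= m U.
  apply: le_trans _ (m_semiconcave AI BI t01); rewrite lerD2l lerN2 -/s -mulrA.
  by rewrite -mulrA; do 2!apply: ler_wpM2l => //; rewrite -sqrrN opprB.
clearbody U.
have UV2 : (U - V) * (U + V) = s * (D2 - (A - B) ^+ 2).
  by rewrite -subr_sqr U2 V2 /s; ring.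
have a_le_UV : a <= U + V.
  by move: UI VI d_le; rewrite !in_itv /= => /andP[loU _] /andP[loV _]; lra.
have V_le_U : V <= U.
  rewrite -subr_ge0 -(pmulr_lge0 _ (lt_le_trans a_gt0 a_le_UV)) UV2.
  by rewrite mulr_ge0 ?subr_ge0.
have gap : a * (U - V) <= s * D2.
  apply: (@le_trans _ _ ((U - V) * (U + V))).
    by rewrite mulrC; apply: ler_wpM2l; rewrite ?subr_ge0.
  by rewrite UV2 ler_wpM2l // lerBlDr lerDl sqr_ge0.
have mUV : m U - m V <= K1 * (U - V).
  have := @m_lipschitz (U, V) (conj UI VI).
  by rewrite /= [`|U - V|]ger0_norm ?subr_ge0 //; apply: le_trans (ler_norm _).
have : K1 * (U - V) <= K1 / a * (s * D2).
  by rewrite -mulrA ler_wpM2l // ler_pdivlMl.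
lra.
Qed.

Let C := K1 ^+ 2 + 2 * K3 * (K1 / a + K2).

Lemma sqr_profile_semiconcave A B V t D2 :
  A \in `]a - d, a + d[%R -> B \in `]a - d, a + d[%R -> V \in `]a - d, a + d[%R ->
  0 <= t <= 1 -> (A - B) ^+ 2 <= D2 ->
  V ^+ 2 = (1 - t) * A ^+ 2 + t * B ^+ 2 - t * (1 - t) * D2 ->
  (1 - t) * m A ^+ 2 + t * m B ^+ 2 - C * (t * (1 - t)) * D2 <= m V ^+ 2.
Proof.
move=> AI BI VI t01 ABD2 V2; have /andP[t0 t1] := t01.
have mV := profile_lower_bound AI BI VI t01 ABD2 V2.
set s := t * (1 - t) in mV *.
have s_ge0 : 0 <= s by rewrite mulr_ge0 ?subr_ge0.
have D2_ge0 : 0 <= D2 by apply: le_trans ABD2; apply: sqr_ge0.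
have /andP[mA_ge0 mA_le] := m_bounded AI.
have /andP[mB_ge0 mB_le] := m_bounded BI.
have /andP[mV_ge0 _] := m_bounded VI.
have mAB : (m A - m B) ^+ 2 <= K1 ^+ 2 * D2.
  have lipAB := @m_lipschitz (A, B) (conj AI BI); rewrite /= in lipAB.
  rewrite -real_normK ?num_real //.
  apply: (@le_trans _ _ ((K1 * `|A - B|) ^+ 2)).
    by rewrite ler_sqr ?nnegrE ?(le_trans (normr_ge0 _) lipAB).
  by rewrite exprMn real_normK ?num_real // ler_wpM2l ?sqr_ge0.
have e_ge0 : 0 <= (K1 / a + K2) * s * D2.
  by apply: mulr_ge0 => //; apply: mulr_ge0 => //; rewrite addr_ge0 ?divr_ge0 // ltW.
have w01 : 0 <= (1 - t) * m A + t * m B <= K3.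
  by rewrite addr_ge0 ?mulr_ge0 ?subr_ge0 //=; nra.
have -> : (1 - t) * m A ^+ 2 + t * m B ^+ 2
    = ((1 - t) * m A + t * m B) ^+ 2 + s * (m A - m B) ^+ 2 by rewrite /s; ring.
have := sqr_ge_of_subr_le w01 e_ge0 mV mV_ge0.
have := ler_wpM2l s_ge0 mAB.
rewrite /C; lra.
Qed.

Lemma convex_profile_ball n (x : 'rV[R]_n) r :
  enorm x = a -> 0 <= r -> r ^+ 2 * C <= 1 ->
  (forall y, enorm (x - y) < r * m (enorm y) -> enorm (x - y) < d) ->
  Defs.convex_set [set y | enorm (x - y) < r * m (enorm y)].
Proof.
move=> xa r_ge0 rC near_x p q /= p_in q_in t t0 t1.
have t01 : 0 <= t <= 1 by rewrite t0 t1.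
have normI y : enorm (x - y) < d -> enorm y \in `]a - d, a + d[%R.
  move=> xy; have := ler_enorm_dist y x.
  by rewrite -[y - x]opprB enormN xa in_itv /= ler_norml; lra.
have m_ge0 y : enorm (x - y) < d -> 0 <= m (enorm y).
  by move=> /normI/m_bounded/andP[].
have sqr_lt (u c : R) : 0 <= u -> u < c -> u ^+ 2 < c ^+ 2.
  by move=> u0 uc; rewrite ltrXn2r.
have [p_near q_near] := (near_x p p_in, near_x q q_in).
set v := (1 - t) *: p + t *: q.
have x_v : enorm (x - v) ^+ 2 = (1 - t) * enorm (x - p) ^+ 2
    + t * enorm (x - q) ^+ 2 - t * (1 - t) * enorm (p - q) ^+ 2.
  have -> : x - v = (1 - t) *: (x - p) + t *: (x - q).
    by apply/matrixP => i j; rewrite !mxE; ring.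
  rewrite sqr_enorm_conv.
  have -> : (x - p) - (x - q) = - (p - q) by apply/matrixP => i j; rewrite !mxE; ring.
  by rewrite enormN.
have sD_ge0 : 0 <= t * (1 - t) * enorm (p - q) ^+ 2.
  by rewrite mulr_ge0 ?sqr_ge0 // mulr_ge0 // subr_ge0.
have v_near : enorm (x - v) < d.
  rewrite -ltr_sqr ?nnegrE ?enorm_ge0 ?(ltW (le_lt_trans (enorm_ge0 _) p_near)) // x_v.
  have := ltr_conv (sqr_lt _ _ (enorm_ge0 _) p_near) (sqr_lt _ _ (enorm_ge0 _) q_near) t01.
  by rewrite -mulrDl subrK mul1r; lra.
have pq : (enorm p - enorm q) ^+ 2 <= enorm (p - q) ^+ 2.
  by rewrite -real_normK ?num_real // ler_sqr ?nnegrE ?enorm_ge0 ?ler_enorm_dist.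
have := sqr_profile_semiconcave (normI p p_near) (normI q q_near) (normI v v_near)
  t01 pq (sqr_enorm_conv t p q).
move=> /(ler_wpM2l (sqr_ge0 r)); rewrite -ltr_sqr ?nnegrE ?enorm_ge0 ?mulr_ge0 ?m_ge0 //.
have := ltr_conv (sqr_lt _ _ (enorm_ge0 _) p_in) (sqr_lt _ _ (enorm_ge0 _) q_in) t01.
have := ler_wpM2r sD_ge0 rC.
rewrite x_v !exprMn; lra.
Qed.

End RadialProfile.

Section RhoM.
Variables (R : realType) (n : nat) (M : R -> R -> R).
Hypothesis M_ge0 : forall s t, 0 <= s -> 0 <= t -> 0 <= M s t.
Hypothesis rhoM_metric : is_metric (@rhoM R M n).
Implicit Types x y : 'rV[R]_n.

Lemma rhoM_ltE x y r : 0 < M (enorm x) (enorm y) ->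
  (rhoM M x y < r) = (enorm (x - y) < r * M (enorm x) (enorm y)).
Proof. by move=> M_gt0; rewrite /rhoM ltr_pdivrMr. Qed.

Lemma rhoM_self x : rhoM M x x = 0.
Proof. by case: rhoM_metric => _ [/(_ x x) [_ ->]]. Qed.

Lemma rhoM_metric_M_gt0 x y : y != x -> 0 < M (enorm x) (enorm y).
Proof.
move=> yx; rewrite lt_def M_ge0 ?enorm_ge0 // andbT; apply: contra yx => /eqP M0.
case: rhoM_metric => _ [/(_ x y) [/(_ _) xy _] _].
by rewrite -xy // /rhoM M0 invr0 mulr0.
Qed.

Lemma rhoM_metric_M_enorm_gt0 x y : x != 0 -> 0 < M (enorm x) (enorm y).
Proof.
move=> x0; have [->|yx] := eqVneq y x; last exact: rhoM_metric_M_gt0.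
(* The diagonal value M(|x|, |x|) is reached at the point -x <> x. *)
rewrite -[in X in M _ X]enormN; apply: rhoM_metric_M_gt0.
apply: contra x0 => /eqP Nxx; apply/eqP/matrixP => i j.
by have := congr1 (fun u : 'rV[R]_n => u i j) Nxx; rewrite !mxE; lra.
Qed.

End RhoM.

Section RhoMBalls.
Variables (R : realType) (n : nat) (M : R -> R -> R).
Hypothesis M_ge0 : forall s t, 0 <= s -> 0 <= t -> 0 <= M s t.
Hypothesis M_mi : moderately_increasing2 M.
Hypothesis rhoM_metric : is_metric (@rhoM R M n).
Hypothesis M_C2 : forall s, 0 <= s -> C2_on_pos (M s).

(* [Defs.convex_set] is qualified: [convex_set] alone is the one of [convex.v]. *)
Lemma rhoM_ball0_convex r : 0 < r ->
  Defs.convex_set [set y : 'rV[R]_n | rhoM M 0 y < r].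
Proof.
have [_ M0_ratio] := (M_mi (lexx 0)).1.
have ratio_gt0 (y : 'rV[R]_n) : y != 0 -> 0 < M 0 (enorm y) / enorm y.
  move=> y0; have := rhoM_metric_M_gt0 M_ge0 rhoM_metric y0.
  by rewrite enorm0 => M0y; rewrite divr_gt0 // enorm_gt0.
have rho0E (y : 'rV[R]_n) : rhoM M 0 y = (M 0 (enorm y) / enorm y)^-1.
  by rewrite /rhoM sub0r enormN enorm0 invf_div.
have radial (c v : 'rV[R]_n) :
    rhoM M 0 c < r -> v != 0 -> enorm v <= enorm c -> rhoM M 0 v < r.
  move=> c_in v0 vc; apply: le_lt_trans c_in.
  have v_gt0 : 0 < enorm v by rewrite enorm_gt0.
  have c0 : c != 0 by rewrite -enorm_gt0 (lt_le_trans v_gt0).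
  by rewrite !rho0E lef_pV2 ?posrE ?ratio_gt0 // M0_ratio.
move=> r_gt0 p q /= p_in q_in t t0 t1.
have [->|v0] := eqVneq ((1 - t) *: p + t *: q) 0; first by rewrite rhoM_self.
have := enorm_conv_le_max p q (t := t); rewrite t0 t1 => /(_ isT).
by have [_|_] := leP (enorm p) (enorm q); apply: radial.
Qed.

Lemma rhoM_locally_convex_at_nonzero (x : 'rV[R]_n) : x != 0 ->
  exists2 r0 : R, 0 < r0 &
    forall r, 0 < r -> r < r0 -> Defs.convex_set [set y | rhoM M x y < r].
Proof.
move=> x0; set a := enorm x; set m := M a.
have a_gt0 : 0 < a by rewrite enorm_gt0.
have m_gt0 (y : 'rV[R]_n) : 0 < m (enorm y).
  by rewrite /m /a; apply: rhoM_metric_M_enorm_gt0.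
have m_mi : moderately_increasing m := (M_mi (ltW a_gt0)).1.
have m_incr := m_mi.1.
have [d [K1 [K2 [/andP[d_gt0 d_le] K1_ge0 K2_ge0 m_lip m_sc]]]] :=
  C2_on_pos_locally_semiconcave a_gt0 (M_C2 (ltW a_gt0)).
set K3 := m (2 * a).
have K3_gt0 : 0 < K3.
  by apply: lt_le_trans (m_gt0 x) _; apply: m_incr; rewrite ?enorm_ge0 // -/a; lra.
have m_bounded : {in `]a - d, a + d[%R, forall s, 0 <= m s <= K3}.
  by move=> s; rewrite in_itv /= => /andP[lo_s s_hi]; rewrite M_ge0 ?m_incr //; lra.
have m_growth s : 0 <= s -> 2 * a * m s <= K3 * (2 * a + s).
  by apply: moderately_increasing_growth; rewrite ?mulr_gt0 ?(ltW K3_gt0).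
set C := K1 ^+ 2 + 2 * K3 * (K1 / a + K2).
have C_ge0 : 0 <= C.
  by rewrite addr_ge0 ?sqr_ge0 // !mulr_ge0 ?addr_ge0 ?divr_ge0 ?(ltW a_gt0) ?(ltW K3_gt0).
exists (Num.min (Num.min (a / K3) (d / (3 * K3))) (1 / (C + 1))).
  by rewrite !lt_min !divr_gt0 ?mulr_gt0 //; lra.
move=> r r_gt0; rewrite !lt_min => /andP[/andP[]].
rewrite !ltr_pdivlMr ?mulr_gt0 ?ltr_wpDl //; try lra.
move=> rK3 rK3d rC.
have -> : [set y | rhoM M x y < r] = [set y | enorm (x - y) < r * m (enorm y)].
  by apply/funext => y /=; rewrite rhoM_ltE.
apply: (convex_profile_ball a_gt0 d_le K1_ge0 K2_ge0 m_bounded m_lip m_sc) => //.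
- exact: ltW.
- have r_lt1 : r < 1 by nra.
  rewrite -/C; have rC_ge0 : 0 <= r * C by rewrite mulr_ge0 // ltW.
  by have := ler_wpM2r rC_ge0 (ltW r_lt1); rewrite expr2; lra.
by move=> y /(profile_ball_sub_ball (ltW r_gt0) (ltW K3_gt0) rK3 m_growth); lra.
Qed.

End RhoMBalls.

Unset Implicit Arguments.

Theorem lemma5p5 (R : realType) (n : nat) (M : R -> R -> R) :
  (forall s t, 0 <= s -> 0 <= t -> 0 <= M s t) ->
  (forall s t, 0 <= s -> 0 <= t -> M s t = M t s) ->
  moderately_increasing2 M ->
  is_metric (@rhoM R M n) ->
  (forall s, 0 <= s -> C2_on_pos (M s)) ->
  locally_convex_metric (@rhoM R M n).
Proof.
move=> M_ge0 _ M_mi rhoM_metric M_C2 x.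
have [->|x0] := eqVneq x 0; last exact: rhoM_locally_convex_at_nonzero.
by exists 1 => // r r_gt0 _; apply: rhoM_ball0_convex.
Qed.
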